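(* Let $\alpha(\cdot)$ and $\beta(\cdot)$ be continuous, positive, integrable functions on $(0,\infty)$ such that $\lim_{u\to\infty}\beta(u)/\alpha(u)=\rho\in[0,\infty]$. Then $$\lim_{z\to\infty}\frac{\int_0^\infty\phi(z;0,u)\beta(u)\,du}{\int_0^\infty\phi(z;0,u)\alpha(u)\,du}=\rho,$$ where $\phi(\cdot;0,u)$ is the $N(0,u)$ density. *)

From mathcomp Require Import all_boot all_order all_algebra.
From mathcomp Require Import all_classical all_reals all_analysis.
Set Implicit Arguments. Unset Strict Implicit. Unset Printing Implicit Defensive.
Import Order.TTheory GRing.Theory Num.Theory.
Local Open Scope ring_scope.

(* phi(z;0,u): density at z of the normal law N(0,u) with mean 0 and
   VARIANCE u (the library's normal_pdf is parameterised by the standard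
   deviation, hence the square root). *)
Definition phi {R : realType} (z u : R) : R := normal_pdf 0 (Num.sqrt u) z.

(* For z >= 1 the kernel phi(z;0,u) is at most exp(-z^2/4M) for u in (0, M],
   whereas the mixture  int phi(z;0,u) alpha(u) du  is at least a constant times
   exp(-z^2/8M), since alpha is positive on [4M, 4M+1], where phi(z;0,u) is at
   least of that order.  So as z -> oo the values of alpha and beta on (0, M]
   are negligible; beyond M, beta/alpha lies within epsilon of rho, and
   integrating these bounds against the kernel bounds the ratio of the mixtures
   in the same way. *)

From mathcomp Require Import all_boot all_order all_algebra.
From mathcomp Require Import all_classical all_reals all_analysis.
From mathcomp Require Import measurable_realfun ring lra.
Set Implicit Arguments. Unset Strict Implicit. Unset Printing Implicit Defensive.
Import Order.TTheory GRing.Theory Num.Theory numFieldNormedType.Exports.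
Local Open Scope classical_set_scope.
Local Open Scope ring_scope.

Section normal_density_in_variance.
Context {R : realType}.
Implicit Types z u : R.

Lemma phiE z u : 0 < u ->
  phi z u = Num.sqrt ((u * pi *+ 2)^-1) * expR (- z ^+ 2 / (u *+ 2)).
Proof.
move=> u0; rewrite /phi /normal_pdf ifF; last by rewrite gt_eqF ?sqrtr_gt0.
rewrite /normal_peak /normal_fun subr0 sqr_sqrtr ?ltW // sqrtrV //.
by rewrite mulrn_wge0 // mulr_ge0 ?ltW ?pi_gt0.
Qed.

Lemma phi_ge0 z u : 0 <= phi z u.
Proof. exact: normal_pdf_ge0. Qed.

Lemma sqrtr_le_expR (t : R) : 0 <= t -> Num.sqrt t <= expR t.
Proof.
move=> t0; apply: le_trans (expR_ge1Dx t).
rewrite -(ger0_norm (_ : 0 <= 1 + t)) ?addr_ge0 // -sqrtr_sqr ler_sqrt ?sqr_ge0 //.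
nra.
Qed.

(* Half of the Gaussian exponent absorbs the prefactor [(2 pi u)^-1/2]. *)
Lemma phi_le_expR z u M : 1 <= z -> 0 < u -> u <= M ->
  phi z u <= expR (- z ^+ 2 / (M * 4)).
Proof.
move=> z1 u0 uM; have z2 : 1 <= z ^+ 2 by rewrite expr_ge1 // (le_trans ler01 z1).
apply: (@le_trans _ _ (expR (- z ^+ 2 / (u * 4)))); last first.
  rewrite ler_expR !mulNr lerN2 ler_pM2l ?(lt_le_trans ltr01 z2) //.
  by rewrite lef_pV2 ?posrE ?mulr_gt0 ?(lt_le_trans u0 uM) // ler_pM2r.
have -> : - z ^+ 2 / (u * 4) = - z ^+ 2 / (u * 4) * 2 + z ^+ 2 / (u * 4).
  by field; rewrite gt_eqF.
rewrite phiE // expRD; set t := (u * 4)^-1.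
have t0 : 0 < t by rewrite invr_gt0 mulr_gt0.
have -> : - z ^+ 2 / (u *+ 2) = - z ^+ 2 / (u * 4) * 2 by field; rewrite gt_eqF.
rewrite mulrC ler_wpM2l ?expR_ge0 //; apply: (@le_trans _ _ (expR t)).
  apply: (@le_trans _ _ (Num.sqrt t)); last exact: sqrtr_le_expR (ltW t0).
  rewrite ler_sqrt ?(ltW t0) //.
  rewrite /t lef_pV2 ?posrE ?mulrn_wgt0 ?mulr_gt0 ?pi_gt0 //.
  by have := pi_ge2 R; rewrite -mulr_natr; nra.
by rewrite ler_expR ler_peMl // ltW.
Qed.

Lemma phi_le1 z u : 1 <= z -> 0 < u -> phi z u <= 1.
Proof.
move=> z1 u0; apply: (le_trans (phi_le_expR z1 u0 (lexx u))).
by rewrite expR_le1 mulNr oppr_le0 mulr_ge0 ?sqr_ge0 // invr_ge0 mulr_ge0 // ltW.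
Qed.

Lemma phi_ge_expR z u a b : 0 < a -> a <= u -> u <= b ->
  Num.sqrt ((b * pi *+ 2)^-1) * expR (- z ^+ 2 / (a *+ 2)) <= phi z u.
Proof.
move=> a0 au ub; have u0 := lt_le_trans a0 au.
rewrite phiE //; apply: ler_pM; rewrite ?sqrtr_ge0 ?expR_ge0 //.
  rewrite ler_sqrt; last by rewrite invr_ge0 mulrn_wge0 // mulr_ge0 ?pi_ge0 // ltW.
  rewrite lef_pV2 ?posrE ?mulrn_wgt0 ?mulr_gt0 ?pi_gt0 // ?(lt_le_trans u0 ub) //.
  by rewrite ler_wMn2r // ler_pM2r ?pi_gt0.
rewrite ler_expR !mulNr lerN2 ler_wpM2l ?sqr_ge0 //.
by rewrite lef_pV2 ?posrE ?mulrn_wgt0 // ler_wMn2r.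
Qed.

Lemma near_expR_Nsqr_le (M K eta : R) : 0 < M -> 0 < eta ->
  \forall z \near +oo, K * expR (- z ^+ 2 / M) <= eta.
Proof.
move=> M0 eta0; near=> z.
have z1 : 1 <= z by near: z; apply: nbhs_pinfty_ge; rewrite num_real.
have zK : `|K| * M / eta <= z by near: z; apply: nbhs_pinfty_ge; rewrite num_real.
rewrite mulNr; set x := z ^+ 2 / M.
have x0 : 0 < x by rewrite divr_gt0 ?exprn_gt0 // (lt_le_trans ltr01).
have expRNx : expR (- x) <= x^-1.
  by rewrite expRN lef_pV2 ?posrE ?expR_gt0 // (le_trans _ (expR_ge1Dx x)) // lerDr.
apply: (le_trans (ler_norm _)); rewrite normrM (ger0_norm (expR_ge0 _)).
apply: (le_trans (ler_wpM2l (normr_ge0 _) expRNx)).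
rewrite /x invf_div mulrA ler_pdivrMr ?exprn_gt0 ?(lt_le_trans ltr01) //.
rewrite ler_pdivrMr // in zK; apply: (le_trans zK).
by rewrite mulrC ler_pM2l // expr2 ler_peMr // (le_trans ler01).
Unshelve. all: by end_near.
Qed.

End normal_density_in_variance.

Lemma integral_gt0 d (T : measurableType d) (R : realType)
    (mu : {measure set T -> \bar R}) (A : set T) (f : T -> \bar R) :
  measurable A -> (0 < mu A)%E -> measurable_fun A f ->
  (forall x, A x -> 0 < f x)%E -> (0 < \int[mu]_(x in A) f x)%E.
Proof.
move=> mA muA0 mf f0; rewrite lt0e integral_ge0 ?andbT; last by move=> x /f0 /ltW.
apply/eqP => intf0.
have [N [mN muN0 fN]] : ae_eq mu A f (cst 0).
  apply/ae_eq_integral_abs => //; rewrite -intf0.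
  by apply: eq_integral => x /[!inE] Ax; rewrite gee0_abs // ltW // f0.
have AN : A `<=` N.
  by move=> x Ax; apply: fN => /(_ Ax) fx0; have := f0 x Ax; rewrite fx0 ltxx.
by move: muA0; rewrite (subset_measure0 mA mN AN muN0) ltxx.
Qed.

Section variance_mixture.
Context {R : realType}.
Implicit Types (z u : R) (f : R -> R).
Local Notation mu := (@lebesgue_measure R).
Local Notation D := (`]0, +oo[%classic : set (measurableTypeR R)).

Let mD : measurable D. Proof. exact: measurable_itv. Qed.

Let D_gt0 u : D u -> 0 < u. Proof. by rewrite /= in_itv andbT. Qed.

Lemma measurable_phi z : measurable_fun D (phi z).
Proof.
have mD_inv : measurable_fun D (@GRing.inv R).
  apply: open_continuous_measurable_fun; first exact: interval_open.
  by move=> u /[!inE] /D_gt0 u0; apply: inv_continuous; rewrite gt_eqF.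
pose h v := Num.sqrt ((pi *+ 2)^-1 * v) * expR (- z ^+ 2 / 2 * v).
apply: (@eq_measurable_fun _ _ _ _ D (h \o GRing.inv)).
  move=> u /[!inE] /D_gt0 u0.
  rewrite phiE // /h /= -mulrnAr [u * _]mulrC invfM -[u *+ 2]mulr_natr invfM.
  by rewrite [u^-1 * _]mulrC mulrA.
apply: (measurableT_comp _ mD_inv); apply: measurable_funM.
  apply: (@measurableT_comp _ _ _ _ _ _ (@Num.sqrt R)); last exact: mulrl_measurable.
  exact: continuous_measurable_fun (@sqrt_continuous R).
by apply: measurableT_comp; [exact: measurable_expR | exact: mulrl_measurable].
Qed.

Local Notation integrable f := (mu.-integrable D (EFin \o f)).

Let integrableZ k f : integrable f -> integrable (fun u => k * f u).
Proof.
move=> int_f; have := integrableZl mD k int_f.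
by apply: eq_integrable => // u _ /=; rewrite EFinM.
Qed.

Definition mixture z f := Rintegral mu D (fun u => phi z u * f u).

Lemma integrable_phiM z f : 1 <= z -> integrable f ->
  integrable (fun u => phi z u * f u).
Proof.
move=> z1 int_f; have phi_bounded : [bounded phi z u | u in D].
  exists 1; split; first by rewrite num_real.
  move=> M M1 u /D_gt0 u0; rewrite /= ger0_norm ?phi_ge0 //.
  exact: le_trans (phi_le1 z1 u0) (ltW M1).
have := integrableMr mD (measurable_phi z) phi_bounded int_f.
by apply: eq_integrable => // u _ /=; rewrite EFinM.
Qed.

Lemma mixtureZ z k f : 1 <= z -> integrable f ->
  mixture z (fun u => k * f u) = k * mixture z f.
Proof.
move=> z1 int_f; rewrite /mixture -RintegralZl //; last exact: integrable_phiM.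
by apply: eq_Rintegral => u _; rewrite mulrCA.
Qed.

Lemma le_mixture z f g h c : 1 <= z -> integrable f -> integrable g ->
  integrable h ->
  (forall u, 0 < u -> phi z u * f u <= phi z u * g u + c * h u) ->
  mixture z f <= mixture z g + c * Rintegral mu D h.
Proof.
move=> z1 int_f int_g int_h le_fgh.
have int_ch := integrableZ c int_h.
rewrite /mixture -RintegralZl // -RintegralD //; last exact: integrable_phiM.
apply: le_Rintegral => //; first exact: integrable_phiM.
  have := integrableD mD (integrable_phiM z1 int_g) int_ch.
  by apply: eq_integrable => // u _ /=; rewrite EFinD.
by move=> u /D_gt0; exact: le_fgh.
Qed.

Lemma mixture_ge_expR alpha M : 0 < M -> (forall u, 0 < u -> 0 < alpha u) ->
  integrable alpha ->
  exists2 c, 0 < c &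
    forall z, 1 <= z -> c * expR (- z ^+ 2 / (M * 8)) <= mixture z alpha.
Proof.
move=> M0 alpha_gt0 int_alpha; set a := M * 4; set b := M * 4 + 1.
have a0 : 0 < a by rewrite mulr_gt0.
have ab : a < b by rewrite ltrDl.
have b0 : 0 < b := lt_trans a0 ab.
pose W := (`[a, b]%classic : set (measurableTypeR R)).
have mW : measurable W by exact: measurable_itv.
have WD : W `<=` D.
  by move=> u /=; rewrite !in_itv /= andbT => /andP[/(lt_le_trans a0)].
have int_W f : integrable f -> mu.-integrable W (EFin \o f) := integrableS mD mW WD.
pose k := Num.sqrt ((b * pi *+ 2)^-1).
exists (k * Rintegral mu W alpha).
  rewrite mulr_gt0 ?sqrtr_gt0 ?invr_gt0 ?mulrn_wgt0 ?mulr_gt0 ?pi_gt0 //.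
  apply: fine_gt0; rewrite integrable_lty ?int_W // andbT integral_gt0 //.
  - have muW_gt0 : (0 < mu W)%E.
      by rewrite lebesgue_measure_itv /= lte_fin ab -EFinB lte_fin subr_gt0.
    exact: muW_gt0.
  - exact: measurable_int (int_W _ int_alpha).
  - by move=> u /WD /D_gt0 /alpha_gt0; rewrite lte_fin.
move=> z z1; have int_phi := integrable_phiM z1 int_alpha.
apply: (@le_trans _ _ (Rintegral mu W (fun u => phi z u * alpha u))).
  rewrite mulrAC -RintegralZl //; last exact: int_W.
  apply: le_Rintegral => //; [exact/int_W/integrableZ | exact: int_W |].
  move=> u; rewrite /W /= in_itv /= => /andP[au ub].
  rewrite ler_wpM2r ?(ltW (alpha_gt0 _ (lt_le_trans a0 au))) //.
  have -> : M * 8 = a *+ 2 by rewrite /a; ring.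
  exact: phi_ge_expR.
rewrite /mixture /Rintegral fine_le ?integrable_fin_num ?int_W //.
apply: ge0_subset_integral => //; first exact: measurable_int int_phi.
by move=> u /D_gt0 u0; rewrite lee_fin mulr_ge0 ?phi_ge0 ?ltW ?alpha_gt0.
Qed.

Lemma mixture_gt0 alpha z : (forall u, 0 < u -> 0 < alpha u) -> integrable alpha ->
  1 <= z -> 0 < mixture z alpha.
Proof.
move=> alpha_gt0 int_alpha z1.
have [c c0 /(_ z z1)] := mixture_ge_expR ltr01 alpha_gt0 int_alpha.
by apply: lt_le_trans; rewrite mulr_gt0 ?expR_gt0.
Qed.

Lemma mixture_le_near alpha f g : (forall u, 0 < u -> 0 < alpha u) ->
  integrable alpha -> integrable f -> integrable g ->
  (forall u, 0 < u -> 0 <= f u) -> (forall u, 0 < u -> 0 <= g u) ->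
  (\forall u \near +oo, f u <= g u) -> forall delta, 0 < delta ->
  \forall z \near +oo, mixture z f <= mixture z g + delta * mixture z alpha.
Proof.
move=> alpha_gt0 int_alpha int_f int_g f_ge0 g_ge0 [M0 [_ le_fg]] delta delta0.
pose M := Num.max M0 1; have M_gt0 : 0 < M by rewrite lt_max ltr01 orbT.
have [c c0 mixture_ge] := mixture_ge_expR M_gt0 alpha_gt0 int_alpha.
near=> z.
have z1 : 1 <= z by near: z; apply: nbhs_pinfty_ge; rewrite num_real.
have small : Rintegral mu D f * expR (- z ^+ 2 / (M * 8)) <= delta * c.
  by near: z; apply: near_expR_Nsqr_le; rewrite ?mulr_gt0.
set E := expR (- z ^+ 2 / (M * 8)) in small *.
have E2 : expR (- z ^+ 2 / (M * 4)) = E * E.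
  by rewrite -expRD; congr expR; field; rewrite gt_eqF.
apply: (@le_trans _ _ (mixture z g + E * E * Rintegral mu D f)).
  apply: le_mixture => // u u0; have [uM | Mu] := leP u M.
    rewrite -E2 ler_wpDl ?mulr_ge0 ?phi_ge0 ?g_ge0 //.
    by rewrite ler_wpM2r ?f_ge0 ?phi_le_expR.
  have M0u : M0 < u by move: Mu; rewrite gt_max => /andP[].
  by rewrite ler_wpDr ?mulr_ge0 ?expR_ge0 ?f_ge0 // ler_wpM2l ?phi_ge0 ?le_fg.
rewrite lerD2l -mulrA [_ * Rintegral _ _ _]mulrC.
apply: (le_trans (ler_wpM2l (expR_ge0 _) small)).
by rewrite mulrCA ler_wpM2l ?(ltW delta0) // mulrC mixture_ge.
Unshelve. all: by end_near.
Qed.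

Section mixture_ratio.
Variables alpha beta : R -> R.
Hypotheses (alpha_gt0 : forall u, 0 < u -> 0 < alpha u)
  (beta_gt0 : forall u, 0 < u -> 0 < beta u).
Hypotheses (int_alpha : integrable alpha) (int_beta : integrable beta).

Let beta_ge0 u : 0 < u -> 0 <= beta u.
Proof. by move/beta_gt0/ltW. Qed.

Let alphaZ_ge0 c : 0 <= c -> forall u, 0 < u -> 0 <= c * alpha u.
Proof. by move=> c0 u /alpha_gt0/ltW; exact: mulr_ge0. Qed.

Lemma mixture_ratio_le c : 0 <= c ->
  (\forall u \near +oo, beta u / alpha u <= c) -> forall delta, 0 < delta ->
  \forall z \near +oo, mixture z beta / mixture z alpha <= c + delta.
Proof.
move=> c0 ratio_le delta delta0.
have le_beta : \forall u \near +oo, beta u <= c * alpha u.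
  near=> u; have u0 : 0 < u by near: u; apply: nbhs_pinfty_gt; rewrite num_real.
  by rewrite -ler_pdivrMr ?alpha_gt0 //; near: u.
have := mixture_le_near alpha_gt0 int_alpha int_beta (integrableZ c int_alpha)
  beta_ge0 (alphaZ_ge0 c0) le_beta delta0.
apply: filterS2 (nbhs_pinfty_ge (num_real 1)) => z z1.
by rewrite mixtureZ // ler_pdivrMr ?mixture_gt0 // mulrDl.
Unshelve. all: by end_near.
Qed.

Lemma mixture_ratio_ge c :
  (\forall u \near +oo, c <= beta u / alpha u) -> forall delta, 0 < delta ->
  \forall z \near +oo, c - delta <= mixture z beta / mixture z alpha.
Proof.
move=> ratio_ge delta delta0; have [c_le0 | c_gt0] := leP c 0.
  near=> z; have z1 : 1 <= z by near: z; apply: nbhs_pinfty_ge; rewrite num_real.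
  by rewrite (@le_trans _ _ 0) ?divr_ge0 ?ltW ?mixture_gt0 //; lra.
have ge_beta : \forall u \near +oo, c * alpha u <= beta u.
  near=> u; have u0 : 0 < u by near: u; apply: nbhs_pinfty_gt; rewrite num_real.
  by rewrite -ler_pdivlMr ?alpha_gt0 //; near: u.
have := mixture_le_near alpha_gt0 int_alpha (integrableZ c int_alpha) int_beta
  (alphaZ_ge0 (ltW c_gt0)) beta_ge0 ge_beta delta0.
apply: filterS2 (nbhs_pinfty_ge (num_real 1)) => z z1.
by rewrite mixtureZ // ler_pdivlMr ?mixture_gt0 // mulrBl lerBlDr.
Unshelve. all: by end_near.
Qed.

End mixture_ratio.

End variance_mixture.

Theorem lemmaS5 (R : realType) (alpha beta : R -> R) (rho : \bar R) :
  {within `]0, +oo[%classic, continuous alpha} ->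
  {within `]0, +oo[%classic, continuous beta} ->
  (forall u : R, 0 < u -> 0 < alpha u) ->
  (forall u : R, 0 < u -> 0 < beta u) ->
  (@lebesgue_measure R).-integrable `]0, +oo[%classic (EFin \o alpha) ->
  (@lebesgue_measure R).-integrable `]0, +oo[%classic (EFin \o beta) ->
  (0 <= rho)%E ->
  (beta u / alpha u)%:E @[u --> +oo%R] --> rho ->
  (Rintegral (@lebesgue_measure R) `]0, +oo[%classic (fun u => phi z u * beta u)
   / Rintegral (@lebesgue_measure R) `]0, +oo[%classic (fun u => phi z u * alpha u))%:E
    @[z --> +oo%R] --> rho.
Proof.
move=> _ _ alpha_gt0 beta_gt0 int_alpha int_beta rho_ge0 ratio_rho.
have ratio_ge := mixture_ratio_ge alpha_gt0 beta_gt0 int_alpha int_beta.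
have ratio_le := mixture_ratio_le alpha_gt0 beta_gt0 int_alpha int_beta.
suff : (mixture z beta / mixture z alpha)%:E @[z --> +oo] --> rho by [].
case: rho rho_ge0 ratio_rho => [r | |] //; rewrite ?lee_fin => r_ge0 ratio_rho.
  apply/fine_cvgP; split; first exact: nearW.
  apply/cvgrPdist_le => e e_gt0 /=; have e2_gt0 : 0 < e / 2 by rewrite divr_gt0.
  move/fine_cvgP : ratio_rho => [_ /cvgrPdist_le /(_ _ e2_gt0) near_r].
  have [ge_r le_r] : (\forall u \near +oo, r - e / 2 <= beta u / alpha u) /\
                     (\forall u \near +oo, beta u / alpha u <= r + e / 2).
    by split; apply: filterS near_r => u; rewrite ler_distlC => /andP[].
  have c_ge0 : 0 <= r + e / 2 by rewrite addr_ge0 // ltW.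
  apply: filterS2 (ratio_ge _ ge_r _ e2_gt0) (ratio_le _ c_ge0 le_r _ e2_gt0).
  move=> z lo hi.
  by rewrite ler_distlC; apply/andP; split; lra.
apply/cvgeryP/cvgryPge => K.
have ge_K : \forall u \near +oo, `|K| + 1 <= beta u / alpha u.
  by move/cvgeryP/cvgryPge : ratio_rho; apply.
apply: filterS (ratio_ge _ ge_K _ ltr01) => z.
by apply: le_trans; rewrite addrK ler_norm.
Qed.
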